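(* Let $\mathcal{A}$ be a finite abelian group. Then $$\Psi_{\mathcal{A}}(x)=\sum_{K\le\mathcal{A}}\mu(K)\left((1+x^2)^{\frac{|K|-|O_2(K)|-1}{2}}(1+x)^{|O_2(K)|}-1\right),$$ and hence $$\mathcal{E}(\mathcal{A})=\Psi_{\mathcal{A}}(1)=\sum_{K\le\mathcal{A}}\mu(K)\left(2^{\frac{|K|+|O_2(K)|-1}{2}}-1\right).$$
   Context: For a finite group $\mathcal{A}$ with identity $e$, let $G(\mathcal{A})=\{\Omega\subseteq\mathcal{A}:\Omega^{-1}=\Omega,\ \langle\Omega\rangle=\mathcal{A},\ e\notin\Omega\}$. For $k\ge1$ let $a_k(\mathcal{A})$ be the number of orbits of the inner automorphism group $\mathrm{Inn}(\mathcal{A})$ (acting by $\alpha\cdot\Omega=\alpha(\Omega)$) on $\{\Omega\in G(\mathcal{A}):|\Omega|=k\}$ (the number of equivalence classes of Cayley graphs of $\mathcal{A}$ of degree $k$); $\Psi_{\mathcal{A}}(x)=\sum_{k=1}^{|\mathcal{A}|-1}a_k(\mathcal{A})x^k$ and $\mathcal{E}(\mathcal{A})=\Psi_{\mathcal{A}}(1)$. For a subgroup $K$, $O_2(K)=\{g\in K:g^2=e,\ g\ne e\}$. The Möbius function $\mu$ on the subgroup lattice of $\mathcal{A}$ is defined recursively by $\sum_{H\ge K}\mu(H)=1$ if $K=\mathcal{A}$ and $=0$ if $K<\mathcal{A}$. *)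

From HB Require Import structures.
From mathcomp Require Import all_boot all_order all_algebra all_fingroup.
Set Implicit Arguments. Unset Strict Implicit. Unset Printing Implicit Defensive.
Import GRing.Theory.

Section CayleyDefs.
Variable gT : finGroupType.
Open Scope group_scope.

Definition cayley_sets (G : {set gT}) (k : nat) : {set {set gT}} :=
  [set S : {set gT} | [&& S \subset G, S^-1 == S, <<S>> == G,
                          1 \notin S & #|S| == k]].

(* a_k(A): number of orbits of Inn(A) (conjugation by elements of G)
   on the Cayley sets of degree k *)
Definition a_k (G : {group gT}) (k : nat) : nat :=
  #|[set orbit 'Js G S | S in cayley_sets G k]|.

Definition Psi (G : {group gT}) : {poly int} :=
  (\sum_(1 <= k < #|G|) (a_k G k)%:R *: 'X^k)%R.

Definition E_count (G : {group gT}) : nat :=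
  (\sum_(1 <= k < #|G|) a_k G k)%N.

Definition O2 (K : {set gT}) : {set gT} :=
  [set g in K | (g ^+ 2 == 1) && (g != 1)].

(* mu is the Moebius function of the subgroup lattice of G:
   sum_{K <= H <= G} mu H = [K = G] for every subgroup K of G. *)
Definition is_subgroup_mobius (G : {group gT}) (mu : {group gT} -> int) : Prop :=
  forall K : {group gT}, K \subset G ->
    (\sum_(H : {group gT} | (K \subset H) && (H \subset G)) mu H)%R
      = (K == G)%:R%R.

End CayleyDefs.

From mathcomp Require Import all_boot all_order all_algebra all_fingroup.
From mathcomp Require Import zify.
Import GRing.Theory.
Local Open Scope ring_scope.

(* For a subset A of a group let P_A(x) = sum x^|S| over the inverse-closed
   subsets S of A.  Every inverse-closed S containing x contains the whole
   pair {x, x^-1}, so removing such pairs one at a time factors P_A as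
   (1 + x)^i (1 + x^2)^((|A| - i)/2), with i the number of self-inverse
   elements of A.  For A = K \ {1}, K a subgroup, the self-inverse elements
   are the involutions O_2(K), giving the factors of the theorem.
   Grouping the nonempty inverse-closed subsets of K \ {1} by the subgroup
   they generate gives P_{K\{1}} - 1 = sum_{L <= K} Q_L, where Q_L counts
   the Cayley sets of L by size; Moebius inversion over the subgroup lattice
   recovers Q_G.  Finally, conjugation is trivial in an abelian group, so
   each Inn(G)-orbit of Cayley sets is a singleton and Psi_G = Q_G; the
   value at 1 gives the count E(G). *)

(* The exponent arithmetic behind evaluating the summands at 1. *)
Lemma half_sub_add (k o : nat) :
  (o < k)%N -> ((k - o - 1)./2 + o = (k + o - 1)./2)%N.
Proof.
move=> lt_ok; have -> : (k + o - 1 = (k - o - 1) + o.*2)%N by rewrite -muln2; lia.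
by rewrite halfD odd_double andbF doubleK.
Qed.

Section CayleySetCounting.
Set Implicit Arguments.
Variable gT : finGroupType.
Implicit Types (A B S T : {set gT}) (x y : gT).

Definition inv_closed A := forall y, y \in A -> (y^-1)%g \in A.

Lemma inv_closedP S : reflect (inv_closed S) (S^-1 == S)%g.
Proof.
apply: (iffP eqP) => [E y yS | H]; first by rewrite -E mem_invg invgK.
apply/eqP; rewrite eqEcard card_invg leqnn andbT; apply/subsetP => y.
by rewrite mem_invg => /H; rewrite invgK.
Qed.

Definition invsub_poly A : {poly int} :=
  \sum_(S : {set gT} | (S \subset A) && (S^-1 == S)%g) 'X^#|S|.

Definition self_inv A := [set y in A | (y^-1 == y)%g].

Lemma invsub_poly0 : invsub_poly set0 = 1.
Proof.
rewrite /invsub_poly (big_pred1 set0) ?cards0 ?expr0 // => S; rewrite subset0.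
case: (S =P set0) => [->|/eqP nS]; last by rewrite /= (negbTE nS).
by rewrite [pred1 _ _]eqxx andTb; apply/inv_closedP => y; rewrite inE.
Qed.

Definition inv_pair x : {set gT} := [set x; x^-1]%g.

Lemma mem_inv_pair x y : (y \in inv_pair x) = (y == x) || (y == x^-1)%g.
Proof. by rewrite !inE. Qed.

Lemma inv_pair_closed x : inv_closed (inv_pair x).
Proof.
by move=> y; rewrite !mem_inv_pair => /orP[]/eqP ->; rewrite ?invgK eqxx ?orbT.
Qed.

Lemma card_inv_pair x : #|inv_pair x| = (if (x^-1 == x)%g then 1 else 2)%N.
Proof. by rewrite /inv_pair cards2 eq_sym; case: eqP. Qed.

Lemma inv_closed_pair S x : inv_closed S ->
  (inv_pair x \subset S) = (x \in S) /\ [disjoint S & inv_pair x] = (x \notin S).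
Proof.
move=> iS; have xiS : (x^-1 \in S)%g = (x \in S).
  by apply/idP/idP => [/iS|/iS//]; rewrite invgK.
split; first by rewrite subUset !sub1set xiS andbb.
apply/idP/idP => [dSB | xS]; first by rewrite (disjointFl dSB) // !inE eqxx.
rewrite -setI_eq0; apply/eqP/setP => y; rewrite !inE.
apply/negP => /andP[yS /orP[]/eqP E]; by rewrite E ?xiS (negbTE xS) in yS.
Qed.

(* Removing an inverse pair B = {x, x^-1} from an inverse-closed set A splits
   P_A as (1 + x^|B|) P_{A \ B}: each inverse-closed subset of A either
   contains B, and is B joined with an inverse-closed subset of A \ B, or
   misses B. *)
Lemma invsub_poly_pair A x : inv_closed A -> x \in A ->
  invsub_poly A = (1 + 'X^#|inv_pair x|) * invsub_poly (A :\: inv_pair x).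
Proof.
move=> iA xA; have iB := @inv_pair_closed x.
have BA : inv_pair x \subset A by rewrite (inv_closed_pair x iA).1.
rewrite /invsub_poly (bigID (fun S => x \notin S)) /= mulrDl mul1r.
congr (_ + _).
  apply: eq_bigl => S; rewrite subsetD.
  case: (inv_closedP S) => iS; rewrite ?andbF ?andbT //.
  by rewrite (inv_closed_pair x iS).2.
rewrite big_distrr /=.
rewrite (reindex_onto (fun T => inv_pair x :|: T) (fun S => S :\: inv_pair x)) /=;
  last first.
  move=> S /andP[/andP[_ /inv_closedP iS]]; rewrite negbK -(inv_closed_pair x iS).1.
  by move=> BS; apply/setP => y; rewrite in_setU in_setD;
    case yB: (y \in inv_pair x) => //=; rewrite (subsetP BS).
apply: eq_big => [T|T /andP[_ /eqP E]].
  apply/idP/idP.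
    case/andP => /andP[/andP[BTA /inv_closedP iBT] _] /eqP E.
    rewrite -E setSD //=; apply/inv_closedP => y.
    rewrite !in_setD => /andP[yB /iBT ->]; rewrite andbT.
    by apply: contra yB => /iB; rewrite invgK.
  case/andP => TAB /inv_closedP iT; move: TAB; rewrite subsetD => /andP[TA dTB].
  rewrite subUset BA TA in_setU !inE eqxx /= andbT; apply/andP; split.
    apply/inv_closedP => y /setUP[yB | yT]; apply/setUP;
      by [left; apply: iB | right; apply: iT].
  by rewrite setDUl setDv set0U; apply/eqP/setDidPl.
by rewrite -exprD cardsU -E setDE setICA setICr setI0 cards0 subn0.
Qed.

Lemma self_inv_sub A : self_inv A \subset A.
Proof. by apply/subsetP => y; rewrite inE => /andP[]. Qed.

Lemma self_invD A C : self_inv (A :\: C) = self_inv A :\: C.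
Proof. by apply/setP => y; rewrite !inE andbA. Qed.

(* The closed form of P_A for an inverse-closed set A, by induction on |A|,
   removing one inverse pair at a time: a self-inverse x contributes 1 + X,
   a pair x <> x^-1 contributes 1 + X^2. *)
Lemma invsub_poly_closed A : inv_closed A ->
  invsub_poly A =
    (1 + 'X) ^+ #|self_inv A| * (1 + 'X ^+ 2) ^+ ((#|A| - #|self_inv A|)./2).
Proof.
have [n leAn] := ubnP #|A|; elim: n A leAn => // n IH A leAn iA.
case: (set_0Vmem A) => [-> | [x xA]].
  have -> : self_inv set0 = set0 by apply/setP => y; rewrite !inE.
  by rewrite invsub_poly0 cards0 expr0 mul1r.
have BA : inv_pair x \subset A by rewrite (inv_closed_pair x iA).1.
have cAB : #|A :\: inv_pair x| = (#|A| - #|inv_pair x|)%N.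
  by rewrite cardsD (setIidPr BA).
have iAB : inv_closed (A :\: inv_pair x).
  move=> y; rewrite !in_setD => /andP[yB yA]; rewrite iA // andbT.
  by apply: contra yB => /inv_pair_closed; rewrite invgK.
have ltAB : (#|A :\: inv_pair x| < n)%N.
  by move: leAn; rewrite cAB card_inv_pair (cardsD1 x A) xA; case: eqP; lia.
have le_self_inv : (#|self_inv (A :\: inv_pair x)| <= #|A :\: inv_pair x|)%N.
  by rewrite subset_leq_card // self_inv_sub.
rewrite (invsub_poly_pair iA xA) IH // self_invD.
move: cAB le_self_inv (subset_leq_card BA); rewrite self_invD card_inv_pair.
have [xi | xi] := eqVneq (x^-1)%g x.
- have xI : x \in self_inv A by rewrite inE xA xi eqxx.
  rewrite /inv_pair xi setUid (cardsD1 x (self_inv A)) xI /= => cAB le_self_inv _.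
  rewrite expr1 mulrA -exprS; congr (_ * _ ^+ _).
  by move: le_self_inv; rewrite cAB (cardsD1 x A) xA; lia.
- have -> : self_inv A :\: inv_pair x = self_inv A.
    apply/setDidPl; rewrite -setI_eq0; apply/eqP/setP => y; rewrite !inE.
    apply/negP => /andP[/andP[_ /eqP yi] /orP[]/eqP E]; move: xi.
      by rewrite -E yi eqxx.
    by rewrite (canRL invgK (esym E)) invgK yi eqxx.
  move=> cAB le_self_inv le2A; rewrite mulrCA -exprS cAB; congr (_ * _ ^+ _).
  suff -> : (#|A| - #|self_inv A| = (#|A| - 2 - #|self_inv A|).+2)%N by [].
  by move: le_self_inv; rewrite cAB; lia.
Qed.

Lemma self_inv_group (K : {group gT}) : self_inv (K :\ 1%g) = O2 K.
Proof.
apply/setP => y; rewrite !inE expgS expg1 -eq_invg_mul eq_sym.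
by case: (y \in K); case: (y^-1 == y)%g; case: (1 == y)%g.
Qed.

Lemma invsub_poly_group (K : {group gT}) :
  invsub_poly (K :\ 1%g) =
    (1 + 'X ^+ 2) ^+ ((#|K| - #|O2 K| - 1)./2) * (1 + 'X) ^+ #|O2 K|.
Proof.
have iK : inv_closed (K :\ 1%g).
  by move=> y; rewrite !inE => /andP[y1 yK]; rewrite invg_eq1 y1 groupV.
rewrite invsub_poly_closed // self_inv_group mulrC; congr (_ * _ ^+ _).
by rewrite (cardsD1 1%g K) group1 /= subnAC add1n subn1.
Qed.

Definition cayley_set (L S : {set gT}) :=
  [&& S \subset L, S^-1 == S, <<S>> == L, 1 \notin S & S != set0]%g.

Definition cayley_poly (L : {set gT}) : {poly int} :=
  \sum_(S | cayley_set L S) 'X^#|S|.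

(* Each nonempty inverse-closed subset of K \ {1} is a Cayley set of exactly
   one subgroup of K, the subgroup it generates. *)
Lemma invsub_poly_by_subgroup (K : {group gT}) :
  invsub_poly (K :\ 1%g) - 1 = \sum_(L : {group gT} | L \subset K) cayley_poly L.
Proof.
rewrite /invsub_poly (bigD1 set0) /=; last first.
  by rewrite sub0set; apply/inv_closedP => y; rewrite inE.
rewrite cards0 expr0 addrC addrK.
rewrite (partition_big (fun S => <<S>>%G) (fun L : {group gT} => L \subset K)) /=.
  apply: eq_bigr => L LK; apply: eq_bigl => S; rewrite /cayley_set.
  have -> : (<<S>>%G == L) = (<<S>> == L :> {set gT})%g by [].
  case E: (<<S>> == L :> {set gT})%g; rewrite ?andbF //=.
  have SL : S \subset L by rewrite -(eqP E) subset_gen.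
  rewrite subsetD1 SL (subset_trans SL LK) /= andbT.
  by case: (1 \in S)%g; case: (S^-1 == S)%g; case: (S == set0).
move=> S /andP[/andP[SK _] _]; rewrite gen_subG.
by apply: subset_trans SK _; apply: subsetDl.
Qed.

Lemma subgroup_mobius_inversion (V : zmodType)
    (G : {group gT}) (mu : {group gT} -> int) (f g : {group gT} -> V) :
  is_subgroup_mobius G mu ->
  (forall K : {group gT}, K \subset G -> g K = \sum_(L : {group gT} | L \subset K) f L) ->
  \sum_(K : {group gT} | K \subset G) g K *~ mu K = f G.
Proof.
move=> muG gf.
under eq_bigr => K KG do rewrite gf // mulrz_suml.
rewrite (exchange_big_dep (fun L : {group gT} => L \subset G)) /=; last first.
  by move=> K L KG LK; apply: subset_trans LK KG.
under eq_bigr => L LG.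
  rewrite -mulrz_sumr (eq_bigl (fun K : {group gT} => (L \subset K) && (K \subset G))).
    by rewrite muG //; over.
  by move=> K; rewrite andbC.
rewrite (bigD1 G) //= eqxx big1 ?addr0 // => L /andP[_ /negbTE->].
by rewrite mulr0z.
Qed.

Lemma orbit_Js_abelian (G : {group gT}) (S : {set gT}) :
  abelian G -> S \subset G -> orbit 'Js G S = [set S].
Proof.
move=> abG SG; apply/setP => T; rewrite inE; apply/imsetP/eqP => [[g gG ->]|->].
  apply/normP; apply: (subsetP (cent_sub S)); apply: (subsetP (centS SG)).
  exact: (subsetP abG g gG).
by exists 1%g; rewrite ?group1 ?act1.
Qed.

Lemma a_k_abelian (G : {group gT}) (k : nat) :
  abelian G -> a_k G k = #|cayley_sets G k|.
Proof.
move=> abG; rewrite /a_k.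
have -> : [set orbit 'Js G S | S in cayley_sets G k] = set1 @: cayley_sets G k.
  apply: eq_in_imset => S; rewrite inE => /and5P[SG _ _ _ _].
  exact: orbit_Js_abelian.
exact/card_imset/set1_inj.
Qed.

(* For abelian G, Psi_G is the generating polynomial Q_G of its Cayley sets:
   group the Cayley sets by their size, which lies in [1, |G|). *)
Lemma Psi_abelian (G : {group gT}) :
  abelian G -> Psi G = cayley_poly G.
Proof.
move=> abG; rewrite /Psi.
transitivity (\sum_(1 <= k < #|G|) \sum_(S in cayley_sets G k) 'X^#|S| : {poly int}).
  apply: eq_bigr => k _; rewrite a_k_abelian // scaler_nat -sumr_const.
  by apply: eq_bigr => S; rewrite inE => /and5P[_ _ _ _ /eqP->].
rewrite big_nat_cond (exchange_big_dep (cayley_set G)) /=; last first.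
  move=> k S /andP[/andP[k1 _] _]; rewrite inE => /and5P[SG iS gS n1 /eqP Sk].
  by rewrite /cayley_set SG iS gS n1 -card_gt0 Sk.
apply: eq_bigr => S /and5P[SG iS gS n1 ne].
have ltSG : (#|S| < #|G|)%N.
  have : S \subset G :\ 1%g by rewrite subsetD1 SG n1.
  by move/subset_leq_card; rewrite (cardsD1 1%g G) group1 add1n ltnS.
rewrite big_geq_mkord (big_pred1 (Ordinal ltSG)) // => k.
rewrite inE SG iS gS n1 /= -val_eqE /= andbT eq_sym.
by case: eqP => [->|_]; rewrite ?andbF // ltSG card_gt0 ne.
Qed.

Lemma E_count_Psi (G : {group gT}) :
  (E_count G)%:R = (Psi G).[1] :> int.
Proof.
rewrite /Psi horner_sum /E_count natr_sum; apply: eq_bigr => k _.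
by rewrite hornerZ hornerXn expr1n mulr1.
Qed.

(* The identity is not an involution, so O_2(K) is a proper subset of K. *)
Lemma card_O2_lt (K : {group gT}) : (#|O2 K| < #|K|)%N.
Proof.
apply: proper_card; rewrite properE; apply/andP; split.
  by apply/subsetP => y; rewrite inE => /andP[].
by apply/subsetPn; exists 1%g; rewrite ?group1 // inE eqxx !andbF.
Qed.

End CayleySetCounting.

Theorem theorem3p1 (gT : finGroupType) (G : {group gT})
    (mu : {group gT} -> int) :
  abelian G ->
  is_subgroup_mobius G mu ->
  Psi G = \sum_(K : {group gT} | K \subset G)
            (mu K)%:P * ((1 + 'X ^+ 2) ^+ ((#|K| - #|O2 K| - 1)./2)
                          * (1 + 'X) ^+ #|O2 K| - 1)
  /\ (E_count G)%:R = (Psi G).[1]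
  /\ (E_count G)%:R = \sum_(K : {group gT} | K \subset G)
            mu K * (2 ^+ ((#|K| + #|O2 K| - 1)./2) - 1) :> int.
Proof.
move=> abG muG.
have Psi_formula : Psi G = \sum_(K : {group gT} | K \subset G)
    (mu K)%:P * ((1 + 'X ^+ 2) ^+ ((#|K| - #|O2 K| - 1)./2)
                  * (1 + 'X) ^+ #|O2 K| - 1).
  rewrite Psi_abelian // -(subgroup_mobius_inversion _ _ muG
    (fun K _ => invsub_poly_by_subgroup K)).
  apply: eq_bigr => K _.
  by rewrite invsub_poly_group -mulrzl -[mu K in RHS]intz rmorph_int.
split=> //; split; first exact: E_count_Psi.
rewrite E_count_Psi Psi_formula horner_sum; apply: eq_bigr => K _.
rewrite !hornerE /= expr1n -exprD half_sub_add ?card_O2_lt //.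
Qed.
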